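(* Let $N\ge1$, $\varepsilon>0$, and let $(b_m)_{m\le N}$ be complex numbers. Let $f$ be a smooth function on $\mathbb R$ such that for some $X>0$ and $Y\ge N^{\varepsilon}$, for $|y|\le2$, $$f(0)=0,\qquad f'(0)=X,\qquad f^{(j+1)}(y)\ll XY^{-j}\ \ (j\ge1).$$ Then there is a nonnegative Schwartz-class function $q$, depending only on $\varepsilon$ and the implied constants in these hypotheses, satisfying $x^jq^{(j)}(x)\ll_{j,C}(1+|x|)^{-C}$, such that $$\int_{-1}^1\Big|\sum_{m\le N}b_me(mf(y))\Big|^2dy\le\int_{\mathbb R}q(y)\Big|\sum_{m\le N}b_me(mXy)\Big|^2dy+O\Big(N^{-100}\sum_{m\le N}|b_m|^2\Big).$$
   Context: $e(x)=e^{2\pi ix}$. *)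

From Stdlib Require Import Reals.
From Coquelicot Require Import Coquelicot.
Open Scope R_scope.

Definition e (x : R) : C := (cos (2 * PI * x), sin (2 * PI * x)).

Definition expsum (N : nat) (b : nat -> C) (g : R) : C :=
  sum_n_m (G := C_AbelianMonoid) (fun m => Cmult (b m) (e (INR m * g))) 1 N.

Definition l2sq (N : nat) (b : nat -> C) : R :=
  sum_n_m (G := R_AbelianMonoid) (fun m => (Cmod (b m))^2) 1 N.

Definition smooth (f : R -> R) : Prop := forall n x, ex_derive_n f n x.

Definition schwartz (q : R -> R) : Prop :=
  smooth q /\ forall j k : nat, exists K, forall x, Rabs (x ^ k * Derive_n q j x) <= K.

(* The weight is [q y = 120 e^{-y^2}], which is at least [4/3] on [[-2, 2]].
   If [Y >= 4 A_1], then [|f''| <= X/4] on [[-1, 1]], so [3X/4 <= f' <= 5X/4] there and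
   [f] maps [[-1, 1]] into [[-2X, 2X]]; substituting [u = f y] and [u = X v] bounds the
   left-hand side by [4/3 * int_{-2}^{2} |S (X v)|^2 dv <= int q(v) |S (X v)|^2 dv], where
   [S] is the exponential sum.  Otherwise [N^eps <= Y < 4 A_1] bounds [N], and the trivial
   bound [|S|^2 <= N * sum |b_m|^2] is absorbed by the error term. *)

From Stdlib Require Import Reals Lra Lia List FunctionalExtensionality Classical.
From Coquelicot Require Import Coquelicot.
Open Scope R_scope.

Fixpoint peval (p : list R) (x : R) : R :=
  match p with nil => 0 | a :: p' => a + x * peval p' x end.

Fixpoint padd (p1 p2 : list R) : list R :=
  match p1, p2 with
  | nil, _ => p2
  | _, nil => p1
  | a :: p1', c :: p2' => (a + c) :: padd p1' p2'
  end.

Definition pscal (c : R) (p : list R) : list R := map (Rmult c) p.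

Fixpoint pder (p : list R) : list R :=
  match p with nil => nil | a :: p' => padd p' (0 :: pder p') end.

Lemma peval_add p1 p2 x : peval (padd p1 p2) x = peval p1 x + peval p2 x.
Proof.
  revert p2; induction p1 as [|a p1 IH]; intros [|c p2]; simpl; try ring.
  rewrite IH; ring.
Qed.

Lemma peval_scal c p x : peval (pscal c p) x = c * peval p x.
Proof. induction p as [|a p IH]; simpl; [ring|]. rewrite IH; ring. Qed.

Lemma is_derive_peval p x : is_derive (peval p) x (peval (pder p) x).
Proof.
  induction p as [|a p IH]; simpl.
  - apply is_derive_Reals, derivable_pt_lim_const.
  - rewrite peval_add; simpl.
    apply is_derive_Reals.
    replace (peval p x + (0 + x * peval (pder p) x))
      with (0 + (1 * peval p x + x * peval (pder p) x)) by ring.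
    apply (derivable_pt_lim_plus (fun _ => a) (fun y => y * peval p y));
      [apply derivable_pt_lim_const|].
    apply (derivable_pt_lim_mult id (peval p));
      [apply derivable_pt_lim_id | apply is_derive_Reals, IH].
Qed.

Lemma peval_bound p : exists c, forall x, Rabs (peval p x) <= c * (1 + Rabs x) ^ length p.
Proof.
  induction p as [|a p [c IH]]; simpl.
  - exists 0; intros x; rewrite Rabs_R0; lra.
  - exists (Rabs a + Rabs c); intros x.
    pose proof (Rabs_pos x) as Hx; pose proof (Rabs_pos a); pose proof (Rabs_pos c).
    pose proof (IH x) as Hp.
    assert (H1 : 1 <= (1 + Rabs x) ^ length p) by (apply pow_R1_Rle; lra).
    assert (Hc : c * (1 + Rabs x) ^ length p <= Rabs c * (1 + Rabs x) ^ length p)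
      by (apply Rmult_le_compat_r; [lra | apply Rle_abs]).
    eapply Rle_trans; [apply Rabs_triang|]. rewrite Rabs_mult.
    set (P := (1 + Rabs x) ^ length p) in *.
    assert (Rabs x * Rabs (peval p x) <= Rabs x * (Rabs c * P))
      by (apply Rmult_le_compat_l; lra).
    assert (Rabs a * 1 <= Rabs a * ((1 + Rabs x) * P)) by (apply Rmult_le_compat_l; nra).
    nra.
Qed.

Definition gauss (p : list R) (x : R) : R := peval p x * exp (- (x * x)).

(* (P e^{-x^2})' = (P' - 2 x P) e^{-x^2} *)
Definition gauss_step (p : list R) : list R := padd (pder p) (pscal (-2) (0 :: p)).

Lemma is_derive_gauss p x : is_derive (gauss p) x (gauss (gauss_step p) x).
Proof.
  unfold gauss, gauss_step. rewrite peval_add, peval_scal; simpl.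
  apply is_derive_Reals.
  replace ((peval (pder p) x + -2 * (0 + x * peval p x)) * exp (- (x * x)))
    with (peval (pder p) x * exp (- (x * x)) + peval p x * (exp (- (x * x)) * - (1 * x + x * 1)))
    by ring.
  apply (derivable_pt_lim_mult (peval p) (fun y => exp (- (y * y))));
    [apply is_derive_Reals, is_derive_peval|].
  apply (derivable_pt_lim_comp (fun y => - (y * y)) exp).
  - apply derivable_pt_lim_opp, derivable_pt_lim_mult; apply derivable_pt_lim_id.
  - apply derivable_pt_lim_exp.
Qed.

Lemma exp_le_compat a b : a <= b -> exp a <= exp b.
Proof. intros [H | ->]; [left; apply exp_increasing, H | right; reflexivity]. Qed.

Lemma exp_INR_mul n t : exp (INR n * t) = exp t ^ n.
Proof.
  induction n as [|n IH]; simpl.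
  - rewrite Rmult_0_l; apply exp_0.
  - rewrite <- IH, <- exp_plus. f_equal. destruct n; simpl; ring.
Qed.

Lemma pow_mul_exp_bounded n : exists K, forall x, (1 + Rabs x) ^ n * exp (- (x * x)) <= K.
Proof.
  exists (exp (INR n * INR n / 4)); intros x.
  pose proof (Rabs_pos x) as Ht.
  assert (Hxx : x * x = Rabs x * Rabs x) by (rewrite <- Rabs_mult, Rabs_pos_eq; nra).
  assert (H1 : (1 + Rabs x) ^ n <= exp (INR n * Rabs x)).
  { rewrite exp_INR_mul. apply pow_incr. split; [lra | apply exp_ineq1_le]. }
  eapply Rle_trans; [apply Rmult_le_compat_r; [left; apply exp_pos | exact H1]|].
  rewrite <- exp_plus, Hxx.
  apply exp_le_compat.
  pose proof (pow2_ge_0 (Rabs x - INR n / 2)); nra.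
Qed.

Lemma gauss_decay p n : exists K, forall x, Rabs (gauss p x) * (1 + Rabs x) ^ n <= K.
Proof.
  destruct (peval_bound p) as [c Hc].
  destruct (pow_mul_exp_bounded (length p + n)) as [K HK].
  exists (Rabs c * K); intros x.
  pose proof (Rabs_pos x).
  assert (Hn : 0 <= (1 + Rabs x) ^ n) by (apply pow_le; lra).
  assert (He : 0 < exp (- (x * x))) by apply exp_pos.
  specialize (HK x); rewrite pow_add in HK.
  unfold gauss; rewrite Rabs_mult, (Rabs_pos_eq (exp _)) by lra.
  assert (Hp : Rabs (peval p x) <= Rabs c * (1 + Rabs x) ^ length p).
  { eapply Rle_trans; [apply Hc|]. apply Rmult_le_compat_r; [apply pow_le; lra | apply Rle_abs]. }
  replace (Rabs (peval p x) * exp (- (x * x)) * (1 + Rabs x) ^ n)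
    with (Rabs (peval p x) * ((1 + Rabs x) ^ n * exp (- (x * x)))) by ring.
  eapply Rle_trans.
  { apply Rmult_le_compat_r; [apply Rmult_le_pos; lra | exact Hp]. }
  rewrite Rmult_assoc. apply Rmult_le_compat_l; [apply Rabs_pos|].
  rewrite <- Rmult_assoc. exact HK.
Qed.

(* [120 e^{-4} >= 4/3] because [e^4 <= 3^4 = 81]. *)
Definition weight : R -> R := gauss (120 :: nil).

Lemma Derive_n_weight j : Derive_n weight j = gauss (Nat.iter j gauss_step (120 :: nil)).
Proof.
  induction j as [|j IH]; [reflexivity|].
  apply functional_extensionality; intros x; simpl; rewrite IH.
  apply is_derive_unique, is_derive_gauss.
Qed.

Lemma weight_nonneg x : 0 <= weight x.
Proof. unfold weight, gauss; simpl. pose proof (exp_pos (- (x * x))); nra. Qed.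

Lemma weight_smooth : smooth weight.
Proof.
  intros [|n] x; [exact I|]. simpl; rewrite Derive_n_weight.
  eexists; apply is_derive_gauss.
Qed.

Lemma continuous_weight x : continuous weight x.
Proof.
  apply (ex_derive_continuous (V := R_NormedModule)); eexists; apply is_derive_gauss.
Qed.

Lemma weight_moment_bound j k n :
  exists K, forall x, Rabs (x ^ k * Derive_n weight j x) * (1 + Rabs x) ^ n <= K.
Proof.
  destruct (gauss_decay (Nat.iter j gauss_step (120 :: nil)) (k + n)) as [K HK].
  exists K; intros x. pose proof (Rabs_pos x).
  rewrite Derive_n_weight, Rabs_mult, <- RPow_abs.
  eapply Rle_trans; [|apply (HK x)]. rewrite pow_add.
  replace (Rabs (gauss _ x) * ((1 + Rabs x) ^ k * (1 + Rabs x) ^ n))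
    with ((1 + Rabs x) ^ k * Rabs (gauss (Nat.iter j gauss_step (120 :: nil)) x) * (1 + Rabs x) ^ n)
    by ring.
  apply Rmult_le_compat_r; [apply pow_le; lra|].
  apply Rmult_le_compat_r; [apply Rabs_pos|]. apply pow_incr; lra.
Qed.

Lemma weight_schwartz : schwartz weight.
Proof.
  split; [exact weight_smooth|]. intros j k.
  destruct (weight_moment_bound j k 0) as [K HK].
  exists K; intros x. specialize (HK x). simpl in HK. lra.
Qed.

Lemma weight_decay j Cc : exists K, forall x,
  Rabs (x ^ j * Derive_n weight j x) <= K * Rpower (1 + Rabs x) (- Cc).
Proof.
  destruct (INR_archimed 1 Cc) as [n Hn]; [lra|]. rewrite Rmult_1_r in Hn.
  destruct (weight_moment_bound j j n) as [K HK].
  exists K; intros x. pose proof (Rabs_pos x).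
  assert (Hpow : 0 < (1 + Rabs x) ^ n) by (apply pow_lt; lra).
  assert (Hrp : / (1 + Rabs x) ^ n <= Rpower (1 + Rabs x) (- Cc)).
  { rewrite <- Rpower_pow, <- Rpower_Ropp by lra. apply Rle_Rpower; lra. }
  assert (HK0 : 0 <= K).
  { eapply Rle_trans; [|apply (HK x)]. apply Rmult_le_pos; [apply Rabs_pos | lra]. }
  eapply Rle_trans; [|apply Rmult_le_compat_l; [exact HK0 | exact Hrp]].
  apply (Rmult_le_reg_r ((1 + Rabs x) ^ n)); [exact Hpow|].
  rewrite Rmult_assoc, Rinv_l, Rmult_1_r by lra. apply HK.
Qed.

Lemma weight_le_Cauchy y : weight y <= 120 / (1 + y ^ 2).
Proof.
  unfold weight, gauss; simpl. rewrite Rmult_0_r, Rplus_0_r, exp_Ropp.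
  apply Rmult_le_compat_l; [lra|].
  apply Rinv_le_contravar; [nra|]. pose proof (exp_ineq1_le (y * y)). lra.
Qed.

Lemma weight_ge y : Rabs y <= 2 -> 4 / 3 <= weight y.
Proof.
  intros Hy. unfold weight, gauss; simpl. rewrite Rmult_0_r, Rplus_0_r.
  assert (Hyy : y * y <= 4) by (apply Rabs_le_between in Hy; nra).
  assert (He4 : exp 4 <= 81).
  { replace 4 with (INR 4 * 1) by (simpl; ring). rewrite exp_INR_mul.
    pose proof exp_le_3. pose proof (exp_pos 1).
    replace 81 with (3 ^ 4) by ring. apply pow_incr; lra. }
  assert (Hlow : / exp 4 <= exp (- (y * y)))
    by (rewrite <- exp_Ropp; apply exp_le_compat; lra).
  assert (/ 81 <= / exp 4) by (apply Rinv_le_contravar; [apply exp_pos | exact He4]).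
  lra.
Qed.

Lemma continuous_C_pair (g1 g2 : R -> R) x : continuous g1 x -> continuous g2 x ->
  continuous (fun u => (g1 u, g2 u) : C) x.
Proof.
  intros H1 H2 P [eps HP]. unfold filtermap.
  apply (filter_imp (fun u => ball (g1 x) eps (g1 u) /\ ball (g2 x) eps (g2 u))).
  - intros u Hu. apply HP, Hu.
  - apply filter_and; [apply H1 | apply H2]; apply locally_ball.
Qed.

Lemma continuous_e x : continuous e x.
Proof.
  apply continuous_C_pair; apply (ex_derive_continuous (V := R_NormedModule)); auto_derive; auto.
Qed.

Lemma Cmod_e x : Cmod (e x) = 1.
Proof.
  unfold Cmod, e; simpl. rewrite !Rmult_1_r, Rplus_comm.
  pose proof (sin2_cos2 (2 * PI * x)) as H. unfold Rsqr in H. rewrite H. apply sqrt_1.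
Qed.

Lemma continuous_expsum N b x : continuous (expsum N b) x.
Proof.
  induction N as [|N IH].
  - apply (continuous_ext (fun _ => zero : C)).
    + intros u. unfold expsum. rewrite sum_n_m_zero; [reflexivity | lia].
    + apply continuous_const.
  - apply (continuous_ext (fun u => plus (expsum N b u : C_NormedModule) (Cmult (b (S N)) (e (INR (S N) * u))))).
    + intros u. unfold expsum. rewrite sum_n_Sm; [reflexivity | lia].
    + apply continuous_plus; [exact IH|].
      apply (continuous_scal_r (V := C_NormedModule) (b (S N)) (fun u => e (INR (S N) * u))).
      apply (continuous_comp (fun u => INR (S N) * u) e); [|apply continuous_e].
      apply (ex_derive_continuous (V := R_NormedModule)); auto_derive; auto.
Qed.

Lemma continuous_Cmod_sqr (z : C) : continuous (fun w : C => Cmod w ^ 2) z.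
Proof.
  apply (continuous_comp (fun w : C => Cmod w) (fun r => r ^ 2)).
  - apply (continuous_ext (fun w : C_R_NormedModule => norm w)); [intros; symmetry; apply Cmod_norm|].
    apply filterlim_norm.
  - apply (ex_derive_continuous (V := R_NormedModule)); auto_derive; auto.
Qed.

Lemma continuous_Cmod_expsum_sqr N b u : continuous (fun v => Cmod (expsum N b v) ^ 2) u.
Proof.
  apply (continuous_comp (expsum N b) (fun z => Cmod z ^ 2));
    [apply continuous_expsum | apply continuous_Cmod_sqr].
Qed.

Lemma l2sq_nonneg N b : 0 <= l2sq N b.
Proof.
  unfold l2sq. change 0 with (@zero R_AbelianMonoid).
  rewrite <- (sum_n_m_const_zero 1 N). apply sum_n_m_le; intros m; apply pow2_ge_0.
Qed.

Lemma Cmod_expsum_le N b u : Cmod (expsum N b u) <= sum_n_m (fun m => Cmod (b m)) 1 N.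
Proof.
  unfold expsum. rewrite Cmod_norm.
  eapply Rle_trans; [apply (norm_sum_n_m (V := C_R_NormedModule))|].
  apply sum_n_m_le; intros m. rewrite <- Cmod_norm, Cmod_mult, Cmod_e, Rmult_1_r. apply Rle_refl.
Qed.

Lemma sum_n_m_sqr_le (a : nat -> R) N :
  (sum_n_m a 1 N) ^ 2 <= INR N * sum_n_m (fun m => a m ^ 2) 1 N.
Proof.
  induction N as [|N IH].
  - rewrite !sum_n_m_zero by lia. simpl. unfold zero; simpl. lra.
  - rewrite !sum_n_Sm, S_INR by lia. change (@plus R_AbelianMonoid) with Rplus.
    destruct (Nat.eq_dec N 0) as [-> | HN].
    { rewrite !sum_n_m_zero by lia. unfold zero; simpl. lra. }
    set (s := sum_n_m a 1 N) in *. set (t := sum_n_m (fun m => a m ^ 2) 1 N) in *.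
    assert (HN0 : 0 < INR N) by (apply lt_0_INR; lia).
    (* [2 s a <= t + N a^2] follows from [(s - N a)^2 >= 0] and [s^2 <= N t] *)
    assert (2 * s * a (S N) <= t + INR N * a (S N) ^ 2).
    { apply (Rmult_le_reg_l (INR N)); [exact HN0|].
      pose proof (pow2_ge_0 (s - INR N * a (S N))); nra. }
    nra.
Qed.

Lemma Cmod_expsum_sqr_le N b u : Cmod (expsum N b u) ^ 2 <= INR N * l2sq N b.
Proof.
  eapply Rle_trans; [|apply sum_n_m_sqr_le].
  apply pow_incr. split; [apply Cmod_ge_0 | apply Cmod_expsum_le].
Qed.

Lemma ex_RInt_of_continuous (G : R -> R) a b : (forall x, continuous G x) -> ex_RInt G a b.
Proof. intros HG. apply (ex_RInt_continuous (V := R_CompleteNormedModule)); intros; apply HG. Qed.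

Section NonnegIntegrals.

Variable F : R -> R.
Hypothesis F_nonneg : forall x, 0 <= F x.
Hypothesis F_cont : forall x, continuous F x.

Lemma RInt_le_widen a a0 b0 b : a <= a0 -> a0 <= b0 -> b0 <= b -> RInt F a0 b0 <= RInt F a b.
Proof.
  intros Ha Hab Hb.
  rewrite <- (RInt_Chasles F a a0 b), <- (RInt_Chasles F a0 b0 b) by apply ex_RInt_of_continuous, F_cont.
  assert (0 <= RInt F a a0) by (apply RInt_ge_0; auto using ex_RInt_of_continuous).
  assert (0 <= RInt F b0 b) by (apply RInt_ge_0; auto using ex_RInt_of_continuous).
  change (@plus R_CompleteNormedModule) with Rplus. lra.
Qed.

(* The improper integral is the supremum of the integrals over the intervals around 0. *)
Lemma is_RInt_gen_nonneg_bounded M :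
  (forall a b, a <= 0 <= b -> RInt F a b <= M) ->
  exists I, is_RInt_gen F (Rbar_locally m_infty) (Rbar_locally p_infty) I /\
    forall a b, a <= 0 <= b -> RInt F a b <= I.
Proof.
  intros HM.
  set (E := fun y => exists a b, a <= 0 <= b /\ y = RInt F a b).
  destruct (completeness E) as [I [Hub Hlub]].
  { exists M. intros y (a & b & Hab & ->). auto. }
  { exists (RInt F 0 0), 0, 0. split; [lra | reflexivity]. }
  exists I. split; [|intros a b Hab; apply Hub; exists a, b; auto].
  intros P [eps HP].
  destruct (classic (exists a0 b0, a0 <= 0 <= b0 /\ I - eps < RInt F a0 b0))
    as [(a0 & b0 & Hab0 & Hclose) | Hfar].
  - apply (Filter_prod _ _ _ (fun a => a < a0) (fun b => b0 < b)).
    + exists a0. auto.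
    + exists b0. auto.
    + intros a b Ha Hb. exists (RInt F a b).
      split; [apply (RInt_correct (V := R_CompleteNormedModule)), ex_RInt_of_continuous, F_cont|].
      apply HP. change (Rabs (RInt F a b - I) < eps).
      assert (RInt F a0 b0 <= RInt F a b) by (apply RInt_le_widen; lra).
      assert (RInt F a b <= I) by (apply Hub; exists a, b; split; [lra | reflexivity]).
      apply Rabs_def1; lra.
  - assert (I <= I - eps).
    { apply Hlub. intros y (a & b & Hab & ->).
      apply Rnot_lt_le. intros Hlt. apply Hfar. exists a, b. auto. }
    pose proof (cond_pos eps). lra.
Qed.

End NonnegIntegrals.

Lemma RInt_le_of_Cauchy_bound (G : R -> R) c a b : 0 <= c ->
  (forall x, continuous G x) -> (forall y, G y <= c / (1 + y ^ 2)) -> a <= b ->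
  RInt G a b <= c * PI.
Proof.
  intros Hc HG Hle Hab.
  assert (Hcont : forall x, continuous (fun y => c / (1 + y ^ 2)) x).
  { intros x. apply (ex_derive_continuous (V := R_NormedModule)). auto_derive. nra. }
  assert (Hint : is_RInt (fun y => c / (1 + y ^ 2)) a b (c * atan b - c * atan a)).
  { apply (is_RInt_derive (V := R_CompleteNormedModule) (fun y => c * atan y)).
    - intros x _. apply is_derive_Reals.
      replace (c / (1 + x ^ 2)) with (c * / (1 + x ^ 2)) by (unfold Rdiv; ring).
      apply derivable_pt_lim_scal, derivable_pt_lim_atan.
    - intros x _. apply Hcont. }
  eapply Rle_trans.
  { apply RInt_le; [exact Hab | | |intros x _; apply Hle].
    - apply ex_RInt_of_continuous, HG.
    - eexists; exact Hint. }
  rewrite (is_RInt_unique _ _ _ _ Hint).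
  pose proof (atan_bound a). pose proof (atan_bound b).
  assert (0 <= c * (PI - (atan b - atan a))) by (apply Rmult_le_pos; lra).
  lra.
Qed.

Lemma is_derive_Derive_n_smooth f n x :
  smooth f -> is_derive (Derive_n f n) x (Derive_n f (S n) x).
Proof. intros Hf. apply Derive_correct, (Hf (S n) x). Qed.

Lemma continuous_Derive_n_smooth f n x : smooth f -> continuous (Derive_n f n) x.
Proof.
  intros Hf. apply (ex_derive_continuous (V := R_NormedModule)).
  eexists; apply is_derive_Derive_n_smooth, Hf.
Qed.

Section Comparison.

Variable h : R -> R.
Hypothesis h_nonneg : forall u, 0 <= h u.
Hypothesis h_cont : forall u, continuous h u.

Lemma continuous_dilate X y : continuous (fun v => h (X * v)) y.
Proof.
  apply (continuous_comp (fun v => X * v) h); [|apply h_cont].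
  apply (ex_derive_continuous (V := R_NormedModule)); auto_derive; auto.
Qed.

Lemma RInt_dilate c a b : RInt h (c * a) (c * b) = c * RInt (fun v => h (c * v)) a b.
Proof.
  rewrite <- (RInt_scal (V := R_CompleteNormedModule)) by (apply ex_RInt_of_continuous, continuous_dilate).
  transitivity (RInt (fun v => scal c (h (c * v + 0))) a b).
  - rewrite (RInt_comp_lin (V := R_CompleteNormedModule)), !Rplus_0_r; [reflexivity|].
    apply ex_RInt_of_continuous, h_cont.
  - apply RInt_ext; intros v _. rewrite Rplus_0_r. reflexivity.
Qed.

Lemma continuous_weight_dilate X y : continuous (fun v => weight v * h (X * v)) y.
Proof.
  apply (continuous_mult weight (fun v => h (X * v))); [apply continuous_weight | apply continuous_dilate].
Qed.

Section Bounded.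

Variable B : R.
Hypothesis h_le : forall u, h u <= B.

Lemma weighted_integral_exists X :
  exists I, is_RInt_gen (fun y => weight y * h (X * y)) (Rbar_locally m_infty) (Rbar_locally p_infty) I
    /\ forall a b, a <= 0 <= b -> RInt (fun y => weight y * h (X * y)) a b <= I.
Proof.
  assert (HB : 0 <= B) by (eapply Rle_trans; [apply (h_nonneg 0) | apply h_le]).
  apply (is_RInt_gen_nonneg_bounded (fun y => weight y * h (X * y)))
    with (M := 120 * B * PI).
  - intros y. apply Rmult_le_pos; [apply weight_nonneg | apply h_nonneg].
  - apply continuous_weight_dilate.
  - intros a b Hab. apply RInt_le_of_Cauchy_bound;
      [| apply continuous_weight_dilate | | lra].
    { pose proof PI_RGT_0. nra. }
    intros y. replace (120 * B / (1 + y ^ 2)) with (120 / (1 + y ^ 2) * B)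
      by (field; pose proof (pow2_ge_0 y); lra).
    apply Rmult_le_compat; [apply weight_nonneg | apply h_nonneg | apply weight_le_Cauchy | apply h_le].
Qed.

Lemma RInt_comp_le_bound f : (forall x, continuous f x) -> RInt (fun y => h (f y)) (-1) 1 <= 2 * B.
Proof.
  intros Hf.
  eapply Rle_trans.
  { apply (RInt_le _ (fun _ => B)); [lra | | apply ex_RInt_const | intros x _; apply h_le].
    apply ex_RInt_of_continuous; intros x.
    apply (continuous_comp f h); [apply Hf | apply h_cont]. }
  rewrite RInt_const. change (scal (1 - -1) B) with ((1 - -1) * B). lra.
Qed.

End Bounded.

Variables (f : R -> R) (X : R).
Hypothesis f_smooth : smooth f.
Hypothesis X_pos : 0 < X.
Hypothesis f_0 : f 0 = 0.
Hypothesis Derive_f_0 : Derive f 0 = X.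
Hypothesis Derive2_f_le : forall y, Rabs y <= 1 -> Rabs (Derive_n f 2 y) <= X / 4.

Lemma Derive_f_close y : Rabs y <= 1 -> Rabs (Derive f y - X) <= X / 4.
Proof.
  intros Hy.
  destruct (MVT_cor4 (Derive f) (Derive_n f 2) 0 1) with (b := y) as (c & Hmvt & Hc).
  - intros c _. apply (is_derive_Derive_n_smooth f 1), f_smooth.
  - rewrite Rminus_0_r; exact Hy.
  - rewrite Derive_f_0, !Rminus_0_r in *. rewrite Hmvt, Rabs_mult.
    assert (Rabs (Derive_n f 2 c) <= X / 4) by (apply Derive2_f_le; lra).
    assert (Rabs (Derive_n f 2 c) * Rabs y <= X / 4 * 1)
      by (apply Rmult_le_compat; auto using Rabs_pos).
    lra.
Qed.

Lemma f_close y : Rabs y <= 1 -> Rabs (f y - X * y) <= X / 4 * Rabs y.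
Proof.
  intros Hy.
  destruct (MVT_cor4 f (Derive f) 0 1) with (b := y) as (c & Hmvt & Hc).
  - intros c _. apply (is_derive_Derive_n_smooth f 0), f_smooth.
  - rewrite Rminus_0_r; exact Hy.
  - rewrite f_0, !Rminus_0_r in *.
    replace (f y - X * y) with ((Derive f c - X) * y) by lra.
    rewrite Rabs_mult. apply Rmult_le_compat_r; [apply Rabs_pos|].
    apply Derive_f_close; lra.
Qed.

Lemma f_endpoints : X * -2 <= f (-1) <= 0 /\ 0 <= f 1 <= X * 2.
Proof.
  pose proof (f_close 1) as H1. pose proof (f_close (-1)) as Hm1.
  rewrite Rabs_R1 in H1. rewrite Rabs_left in Hm1 by lra.
  apply Rabs_le_between in H1; [|lra]. apply Rabs_le_between in Hm1; [|lra].
  lra.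
Qed.

Lemma continuous_Derive_mul_comp x : continuous (fun y => Derive f y * h (f y)) x.
Proof.
  apply (continuous_mult (Derive f) (fun y => h (f y))).
  - apply (continuous_Derive_n_smooth f 1), f_smooth.
  - apply (continuous_comp f h); [apply (continuous_Derive_n_smooth f 0), f_smooth | apply h_cont].
Qed.

Lemma RInt_comp_le_Derive :
  RInt (fun y => h (f y)) (-1) 1 <= 4 / (3 * X) * RInt (fun y => Derive f y * h (f y)) (-1) 1.
Proof.
  rewrite <- (RInt_scal (V := R_CompleteNormedModule))
    by (apply ex_RInt_of_continuous, continuous_Derive_mul_comp).
  apply RInt_le; [lra | | |].
  - apply ex_RInt_of_continuous; intros x.
    apply (continuous_comp f h); [apply (continuous_Derive_n_smooth f 0), f_smooth | apply h_cont].
  - apply ex_RInt_of_continuous; intros x.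
    apply (continuous_scal_r (V := R_NormedModule)), continuous_Derive_mul_comp.
  - intros x Hx. pose proof (h_nonneg (f x)).
    assert (Hdf : Rabs (Derive f x - X) <= X / 4) by (apply Derive_f_close, Rabs_le; lra).
    apply Rabs_le_between in Hdf.
    change (scal (4 / (3 * X)) (Derive f x * h (f x))) with (4 / (3 * X) * (Derive f x * h (f x))).
    replace (4 / (3 * X) * (Derive f x * h (f x))) with (4 / 3 * (Derive f x / X) * h (f x))
      by (field; lra).
    assert (1 <= 4 / 3 * (Derive f x / X))
      by (apply (Rmult_le_reg_r X); [lra|]; unfold Rdiv; field_simplify; lra).
    nra.
Qed.

(* Since [f' >= 3X/4] on [[-1, 1]], substituting [u = f y] and then [u = X v]
   costs at most the factor [4/3]. *)
Lemma RInt_comp_le_dilate :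
  RInt (fun y => h (f y)) (-1) 1 <= 4 / 3 * RInt (fun v => h (X * v)) (-2) 2.
Proof.
  assert (Hsubst : RInt (fun y => Derive f y * h (f y)) (-1) 1 = RInt h (f (-1)) (f 1)).
  { apply (RInt_comp (V := R_CompleteNormedModule) h f (Derive f)).
    - intros x _. apply h_cont.
    - intros x _. split; [apply (is_derive_Derive_n_smooth f 0), f_smooth|].
      apply (continuous_Derive_n_smooth f 1), f_smooth. }
  assert (Hwiden : RInt h (f (-1)) (f 1) <= RInt h (X * -2) (X * 2))
    by (pose proof f_endpoints; apply RInt_le_widen; auto; lra).
  rewrite RInt_dilate in Hwiden.
  pose proof RInt_comp_le_Derive as Hcomp. rewrite Hsubst in Hcomp.
  assert (0 < 4 / (3 * X)) by (apply Rdiv_lt_0_compat; lra).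
  replace (4 / 3 * RInt (fun v => h (X * v)) (-2) 2)
    with (4 / (3 * X) * (X * RInt (fun v => h (X * v)) (-2) 2)) by (field; lra).
  nra.
Qed.

Lemma RInt_comp_le_weighted :
  RInt (fun y => h (f y)) (-1) 1 <= RInt (fun y => weight y * h (X * y)) (-2) 2.
Proof.
  eapply Rle_trans; [apply RInt_comp_le_dilate|].
  rewrite <- (RInt_scal (V := R_CompleteNormedModule))
    by (apply ex_RInt_of_continuous, continuous_dilate).
  apply RInt_le; [lra | | |].
  - apply ex_RInt_of_continuous; intros x.
    apply (continuous_scal_r (V := R_NormedModule)), continuous_dilate.
  - apply ex_RInt_of_continuous, continuous_weight_dilate.
  - intros y Hy. pose proof (h_nonneg (X * y)).
    assert (4 / 3 <= weight y) by (apply weight_ge, Rabs_le; lra).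
    change (scal (4 / 3) (h (X * y))) with (4 / 3 * h (X * y)). nra.
Qed.

End Comparison.

Lemma le_Rpower_div_pow n eps Z k : 0 < n -> 0 < eps -> Rpower n eps <= Z ->
  n <= Rpower Z (INR (S k) / eps) / n ^ k.
Proof.
  intros Hn Heps HZ.
  assert (Hnk : 0 < n ^ k) by (apply pow_lt, Hn).
  apply (Rmult_le_reg_r (n ^ k)); [exact Hnk|].
  unfold Rdiv; rewrite Rmult_assoc, Rinv_l, Rmult_1_r by lra.
  replace (n * n ^ k) with (n ^ S k) by reflexivity.
  rewrite <- (Rpower_pow (S k) n Hn).
  replace (INR (S k)) with (eps * (INR (S k) / eps)) at 1 by (field; lra).
  rewrite <- Rpower_mult. apply Rle_Rpower_l.
  - apply Rlt_le, Rdiv_lt_0_compat; [apply lt_0_INR; lia | exact Heps].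
  - split; [apply exp_pos | exact HZ].
Qed.

Lemma INR_mul_le_Rpower_inv_pow N eps Z L : (1 <= N)%nat -> 0 < eps ->
  Rpower (INR N) eps <= Z -> 0 <= L -> INR N * L <= Rpower Z (101 / eps) * / INR N ^ 100 * L.
Proof.
  intros HN Heps HZ HL. apply Rmult_le_compat_r; [exact HL|].
  replace 101 with (INR 101) by (simpl; ring).
  apply le_Rpower_div_pow; [apply lt_0_INR; lia | exact Heps | exact HZ].
Qed.

Lemma mul_div_le_quarter a X Y : 0 < X -> 0 < Y -> 4 * a <= Y -> a * X / Y <= X / 4.
Proof.
  intros HX HY Ha. apply (Rmult_le_reg_r Y); [exact HY|].
  unfold Rdiv; rewrite Rmult_assoc, Rinv_l by lra. nra.
Qed.

Theorem lemma7p4 :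
  forall (eps : R), 0 < eps ->
  forall (A : nat -> R),  (* implied constants: |f^(j+1)(y)| <= A j * X * Y^-j *)
  exists q : R -> R,
    (forall x, 0 <= q x) /\ schwartz q /\
    (forall (j : nat) (Cc : R), exists K, forall x,
        Rabs (x ^ j * Derive_n q j x) <= K * Rpower (1 + Rabs x) (- Cc)) /\
    exists K0 : R,
      forall (N : nat) (b : nat -> C) (f : R -> R) (X Y : R),
        (1 <= N)%nat -> smooth f -> 0 < X -> Rpower (INR N) eps <= Y ->
        f 0 = 0 -> Derive f 0 = X ->
        (forall (j : nat) (y : R), (1 <= j)%nat -> Rabs y <= 2 ->
            Rabs (Derive_n f (S j) y) <= A j * X / Y ^ j) ->
        exists I : R,
          is_RInt_gen (fun y => q y * (Cmod (expsum N b (X * y)))^2)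
                      (Rbar_locally m_infty) (Rbar_locally p_infty) I /\
          RInt (fun y => (Cmod (expsum N b (f y)))^2) (-1) 1
            <= I + K0 * / (INR N) ^ 100 * l2sq N b.
Proof.
  intros eps Heps A. exists weight.
  split; [exact weight_nonneg|]. split; [exact weight_schwartz|]. split; [exact weight_decay|].
  set (Z := Rmax 1 (4 * A 1%nat)).
  exists (2 * Rpower Z (101 / eps)).
  intros N b f X Y HN Hf HX HY f0 Df0 Hd.
  set (h := fun u => Cmod (expsum N b u) ^ 2).
  assert (h_nonneg : forall u, 0 <= h u) by (intros u; apply pow2_ge_0).
  assert (h_le : forall u, h u <= INR N * l2sq N b) by (intros u; apply Cmod_expsum_sqr_le).
  destruct (weighted_integral_exists h h_nonneg (continuous_Cmod_expsum_sqr N b) _ h_le X)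
    as (I & HI & HIle).
  exists I. split; [exact HI|].
  change (fun y => Cmod (expsum N b (f y)) ^ 2) with (fun y => h (f y)).
  assert (Herr : 0 <= 2 * Rpower Z (101 / eps) * / INR N ^ 100 * l2sq N b).
  { pose proof (exp_pos (101 / eps * ln Z)). pose proof (lt_0_INR N ltac:(lia)).
    apply Rmult_le_pos; [|apply l2sq_nonneg].
    apply Rmult_le_pos; [unfold Rpower; lra | apply Rlt_le, Rinv_0_lt_compat, pow_lt; lra]. }
  destruct (Rle_dec (4 * A 1%nat) Y) as [Hlarge | Hsmall].
  - assert (HY0 : 0 < Y) by (eapply Rlt_le_trans; [apply exp_pos | exact HY]).
    assert (Hd2 : forall y, Rabs y <= 1 -> Rabs (Derive_n f 2 y) <= X / 4).
    { intros y Hy. eapply Rle_trans; [apply (Hd 1%nat y); [lia | lra]|].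
      rewrite pow_1. apply mul_div_le_quarter; assumption. }
    pose proof (RInt_comp_le_weighted h h_nonneg (continuous_Cmod_expsum_sqr N b) f X Hf HX f0 Df0 Hd2).
    pose proof (HIle (-2) 2 ltac:(lra)). lra.
  - assert (HNZ : INR N * l2sq N b <= Rpower Z (101 / eps) * / INR N ^ 100 * l2sq N b).
    { apply INR_mul_le_Rpower_inv_pow; [exact HN | exact Heps | | apply l2sq_nonneg].
      assert (4 * A 1%nat <= Z) by apply Rmax_r. lra. }
    pose proof (RInt_comp_le_bound h (continuous_Cmod_expsum_sqr N b) _ h_le f
                  (fun x => continuous_Derive_n_smooth f 0 x Hf)).
    pose proof (HIle 0 0 ltac:(lra)) as HI0. rewrite RInt_point in HI0.
    change (@zero R_CompleteNormedModule) with 0 in HI0. lra.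
Qed.
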